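(* If $\mathcal{I}$ is a boring ideal, then every Hausdorff space in $\mathrm{FinBW}(\mathcal{I})$ is a boring space.
   Context: An ideal on an infinite countable set $X$ is a family $\mathcal{I}\subseteq\mathcal{P}(X)$ closed under subsets and finite unions, containing all finite subsets, with $X\notin\mathcal{I}$. A space $X$ is in $\mathrm{FinBW}(\mathcal{I})$ if $X$ is Hausdorff and for every sequence $(x_n)_{n\in\bigcup\mathcal{I}}$ in $X$ there is $A\notin\mathcal{I}$ with $(x_n)_{n\in A}$ convergent in $X$. $\mathrm{Fin}^2$: ideal on $\omega^2$ of all $A$ with only finitely many $n$ such that $\{m:(n,m)\in A\}$ is infinite. $\mathcal{BI}$: ideal on $\omega^3$ of all $A$ for which there is $k$ with $\{(j,l):(i,j,l)\in A\}\in\mathrm{Fin}^2$ for $i<k$ and finite for $i\ge k$. $\mathcal{I}\sqsubseteq\mathcal{J}$: there is a bijection $f:\bigcup\mathcal{J}\to\bigcup\mathcal{I}$ with $f^{-1}[A]\in\mathcal{J}$ for all $A\in\mathcal{I}$. $\mathcal{I}$ is boring if $\mathcal{BI}\sqsubseteq\mathcal{I}$. A topological space is boring if it is sequentially compact and there is a finite $F\subseteq X$ such that every convergent sequence in $X$ with infinitely many distinct values converges to some point of $F$. *)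

From HB Require Import structures.
From mathcomp Require Import all_boot all_order.
From mathcomp Require Import boolp classical_sets functions cardinality topology.

Set Implicit Arguments.
Unset Strict Implicit.
Unset Printing Implicit Defensive.

Local Open Scope classical_set_scope.

Definition is_ideal (X : Type) (I : set (set X)) : Prop :=
  [/\ countable [set: X] /\ infinite_set [set: X],
      (forall A B : set X, B `<=` A -> I A -> I B),
      (forall A B : set X, I A -> I B -> I (A `|` B)),
      (forall A : set X, finite_set A -> I A) &
      ~ I [set: X]].

Definition Fin2 : set (set (nat * nat)) :=
  fun A => finite_set [set n | infinite_set [set m | A (n, m)]].

(* BI on omega^3, represented as nat * (nat * nat); (i,j,l) is (i,(j,l)). *)
Definition BI : set (set (nat * (nat * nat))) :=
  fun A => exists k : nat,
    (forall i, (i < k)%N -> Fin2 [set p | A (i, p)]) /\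
    (forall i, (k <= i)%N -> finite_set [set p | A (i, p)]).

Definition ideal_below (X Y : Type) (I : set (set X)) (J : set (set Y)) : Prop :=
  exists f : Y -> X, bijective f /\ (forall A : set X, I A -> J (f @^-1` A)).

Definition boring_ideal (X : Type) (I : set (set X)) : Prop :=
  ideal_below BI I.

Definition cvg_along (X : Type) (T : topologicalType) (A : set X)
    (u : X -> T) (x : T) : Prop :=
  forall U : set T, nbhs x U -> finite_set (A `&` [set n | ~ U (u n)]).

Definition FinBW (X : Type) (I : set (set X)) (T : topologicalType) : Prop :=
  hausdorff_space T /\
  forall u : X -> T, exists A : set X, ~ I A /\ exists x : T, cvg_along A u x.

Definition seq_compact (T : topologicalType) : Prop :=
  forall u : nat -> T, exists phi : nat -> nat,
    (forall n, (phi n < phi n.+1)%N) /\ exists x : T, (u \o phi) @ \oo --> x.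

Definition boring_space (T : topologicalType) : Prop :=
  seq_compact T /\
  exists F : set T, finite_set F /\
    forall u : nat -> T, (exists x : T, u @ \oo --> x) -> infinite_set (range u) ->
      exists2 x, F x & u @ \oo --> x.

From mathcomp Require Import all_boot all_order.
From mathcomp Require Import boolp classical_sets functions cardinality topology.

(* Since BI ⊑ I, the FinBW property passes from I to BI (only this relation is
   used, not the ideal axioms of I), so it suffices to handle sequences indexed
   by ω³.  Sequential compactness: index u by ω³ through a coding of the last
   two coordinates; a BI-positive set has an infinite section, along which u
   converges.  Finitely many limits: if infinitely many distinct points x_i were
   limits of sequences with infinite range, pick an injective double sequence
   c(i,j) with c(i,j) → x_i as j → ∞.  If (c(i,j))_{(i,j,l) ∈ B} converges to y,
   Hausdorffness forces c(i,j) = y whenever the fibre of B over (i,j) is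
   infinite, and x_i = y whenever the section of B at i is infinite with finite
   fibres; by injectivity of c and x this puts B in BI, contradicting FinBW(BI). *)

Set Implicit Arguments.
Unset Strict Implicit.
Unset Printing Implicit Defensive.

Local Open Scope classical_set_scope.

Lemma finite_subset_II (A : set nat) : finite_set A -> exists M, A `<=` `I_M.
Proof.
move=> /finite_fsetP[S ->]; exists (\max_(i <- finmap.enum_fset S) i).+1 => n /= nS.
by rewrite ltnS; apply: (@leq_bigmax_seq _ (finmap.enum_fset S) xpredT id n).
Qed.

Lemma infinite_set_unbounded (A : set nat) (m : nat) :
  infinite_set A -> exists n, A n /\ (m < n)%N.
Proof.
move=> /infinite_setD /(_ (finite_II m.+1)) /infinite_setN0[n [An /= nm]].
by exists n; split; rewrite // ltnNge -ltnS; apply/negP.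
Qed.

Lemma finite_image_injective (T U : Type) (f : T -> U) (A : set T) :
  injective f -> finite_set (f @` A) -> finite_set A.
Proof.
move=> finj /(finite_preimage (f := f)) fAfin.
apply: sub_finite_set (fAfin _); first by move=> a Aa; exists a.
by move=> a b _ _ /finj.
Qed.

Lemma finite_injective_fiber (T U : Type) (f : T -> U) (y : U) :
  injective f -> finite_set [set t | f t = y].
Proof.
move=> finj; apply: (@finite_preimage _ _ [set y]); last exact: finite_set1.
by move=> a b _ _ /finj.
Qed.

Lemma infinite_range_tail (T : Type) (f : nat -> T) (j : nat) :
  infinite_set (range f) -> infinite_set (f @` [set k | (j <= k)%N]).
Proof.
move=> finf tail_fin; apply: finf.
have : finite_set (f @` `I_j `|` f @` [set k | (j <= k)%N]).
  by rewrite finite_setU; split=> //; exact: finite_image.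
apply: sub_finite_set => _ [k _ <-]; case: (ltnP k j) => kj; [left|right]; by exists k.
Qed.

Section InjectiveSelection.
Variable T : choiceType.

Fixpoint greedy_prefix (g : nat -> seq T -> T) (n : nat) : seq T :=
  if n is n'.+1 then rcons (greedy_prefix g n') (g n' (greedy_prefix g n')) else [::].

Lemma greedy_prefix_mem (g : nat -> seq T -> T) m n :
  (m < n)%N -> g m (greedy_prefix g m) \in greedy_prefix g n.
Proof.
elim: n => // n IH; rewrite ltnS leq_eqVlt => /orP[/eqP->|mn] /=;
  by rewrite mem_rcons inE ?eqxx ?IH ?orbT.
Qed.

Lemma injective_selection (P : nat -> set T) :
  (forall n, infinite_set (P n)) ->
  exists2 w : nat -> T, injective w & forall n, P n (w n).
Proof.
move=> Pinf.
have fresh n (s : seq T) : exists t, P n t /\ t \notin s.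
  have /infinite_setN0[t [Pt /= ts]] := infinite_setD (Pinf n) (finite_seq s).
  by exists t; split => //; apply/negP.
have [g gP] := choice (fun p : nat * seq T => fresh p.1 p.2).
pose g' n s := g (n, s).
exists (fun n => g' n (greedy_prefix g' n)); last by move=> n; exact: (gP (n, _)).1.
have fresh_later m n :
    (m < n)%N -> g' m (greedy_prefix g' m) <> g' n (greedy_prefix g' n).
  move=> mn E; have := greedy_prefix_mem g' mn; rewrite E.
  by rewrite (negbTE (gP (n, _)).2).
by move=> m n E; case: (ltngtP m n) => // [/fresh_later|/fresh_later/nesym].
Qed.

End InjectiveSelection.

Lemma injective_tail_selection (T : choiceType) (u : nat -> nat -> T) :
  (forall i, infinite_set (range (u i))) ->
  exists2 c : nat * nat -> T, injective c &
    forall i j, exists2 k, (j <= k)%N & c (i, j) = u i k.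
Proof.
move=> uinf.
(* Off the codes of pairs, [d] returns the junk value (0, 0); only codes matter. *)
pose d n : nat * nat := odflt (0, 0) (unpickle n).
have [w w_inj wP] := injective_selection
  (fun n => infinite_range_tail (j := (d n).2) (uinf (d n).1)).
exists (w \o pickle) => [p q /w_inj /(pcan_inj pickleK) //|i j /=].
by have [k jk <-] := wP (pickle (i, j)); rewrite /d pickleK in jk *; exists k.
Qed.

Section CvgAlong.
Variable T : topologicalType.

Lemma cvg_along_cst (X : Type) (A : set X) (t : T) : cvg_along A (cst t) t.
Proof.
move=> U /nbhs_singleton Ut; apply: (sub_finite_set _ (finite_set0 _)).
by move=> n [_ /= /(_ Ut)].
Qed.

Lemma cvg_along_image (X Y : Type) (f : X -> Y) (A : set X) (u : Y -> T) x :
  cvg_along A (u \o f) x -> cvg_along (f @` A) u x.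
Proof.
move=> ux U /ux /(finite_image f); apply: sub_finite_set.
by move=> _ [[a Aa <-] nU]; exists a.
Qed.

Lemma cvg_along_preimage (X Y : Type) (f : X -> Y) (A : set Y) (u : Y -> T) x :
  injective f -> cvg_along A u x -> cvg_along (f @^-1` A) (u \o f) x.
Proof.
move=> finj ux U /ux /(finite_preimage (f := f)) fin; apply: fin.
by move=> a b _ _ /finj.
Qed.

Lemma cvg_along_unique (X : Type) (A : set X) (u : X -> T) x y :
  hausdorff_space T -> infinite_set A -> cvg_along A u x -> cvg_along A u y -> x = y.
Proof.
move=> hT Ainf ux uy; apply: hT => U V xU yV.
have bad_fin : finite_set ((A `&` [set n | ~ U (u n)]) `|` (A `&` [set n | ~ V (u n)])).
  by rewrite finite_setU; split; [exact: ux | exact: uy].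
have /infinite_setN0[n [An /= nUV]] := infinite_setD Ainf bad_fin.
by exists (u n); split; apply: contrapT => nu; apply: nUV; [left|right].
Qed.

Lemma cvg_along_fst (Y : Type) (A : set (nat * Y)) (a : nat -> T) x :
  a @ \oo --> x -> (forall j, finite_set [set l | A (j, l)]) ->
  cvg_along A (a \o fst) x.
Proof.
move=> ax Afin U /ax [N _ aU].
apply: (sub_finite_set _ (bigcup_finite (finite_II N)
  (fun j _ => finite_image (pair j) (Afin j)))).
move=> [j l] [Ajl /= naU]; exists j; last by exists l.
by rewrite /= ltnNge; apply/negP => /aU.
Qed.

Lemma cvg_along_subseq (u : nat -> T) (N : set nat) x :
  infinite_set N -> cvg_along N u x ->
  exists phi : nat -> nat, (forall n, (phi n < phi n.+1)%N) /\ (u \o phi) @ \oo --> x.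
Proof.
move=> Ninf ux.
have [g gP] := choice (fun m => infinite_set_unbounded m Ninf).
pose phi := fix phi n := if n is n'.+1 then g (phi n') else g 0.
have phiN n : N (phi n) by case: n => [|n]; exact: (gP _).1.
have phi_ge n : (n <= phi n)%N by elim: n => //= n IH; exact: leq_ltn_trans IH (gP _).2.
exists phi; split=> [n|U /ux /finite_subset_II [M badM]]; first exact: (gP _).2.
exists M => // n /= Mn; apply: contrapT => nU.
by have := badM _ (conj (phiN n) nU); rewrite /= ltnNge (leq_trans Mn (phi_ge n)).
Qed.

End CvgAlong.

Lemma notBI_infinite_section (B : set (nat * (nat * nat))) :
  ~ BI B -> exists i, infinite_set [set p | B (i, p)].
Proof.
move=> nB; apply: contrapT => all_fin; apply: nB; exists 0; split=> // i _.
by apply: contrapT => Binf; apply: all_fin; exists i.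
Qed.

Lemma BI_of_Fin2_sections (B : set (nat * (nat * nat))) :
  (forall i, Fin2 [set p | B (i, p)]) ->
  finite_set [set i | infinite_set [set p | B (i, p)]] -> BI B.
Proof.
move=> Bfin2 /finite_subset_II[k infk]; exists k; split=> // i ki.
by apply: contrapT => /infk; rewrite /= ltnNge ki.
Qed.

Section CvgAlongBI.
Variables (T : topologicalType) (c : nat * nat -> T) (x : nat -> T).
Hypotheses (hT : hausdorff_space T) (c_inj : injective c) (x_inj : injective x).
Hypothesis c_cvg : forall i, (fun j => c (i, j)) @ \oo --> x i.

Lemma cvg_along_BI (B : set (nat * (nat * nat))) y :
  cvg_along B (fun m => c (m.1, m.2.1)) y -> BI B.
Proof.
move=> By.
have fiber_inf i j : infinite_set [set l | B (i, (j, l))] -> c (i, j) = y.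
  move=> Sinf; apply: (cvg_along_unique hT Sinf); first exact: cvg_along_cst.
  by apply: (cvg_along_preimage (f := fun l => (i, (j, l)))) By => l l' [].
have section_inf i :
    infinite_set [set p | B (i, p)] -> (exists j, c (i, j) = y) \/ x i = y.
  move=> Binf; case: (pselect (exists j, infinite_set [set l | B (i, (j, l))])).
    by move=> [j /fiber_inf]; left; exists j.
  move=> nofiber; right; apply: (cvg_along_unique hT Binf).
    apply: (cvg_along_fst (a := fun j => c (i, j))) => [|j]; first exact: c_cvg.
    by apply: contrapT => Sinf; apply: nofiber; exists j.
  by apply: (cvg_along_preimage (f := pair i)) By => p q [].
apply: BI_of_Fin2_sections => [i|].
  apply: sub_finite_set (finite_injective_fiber (f := fun j => c (i, j)) y _).
    by move=> j /fiber_inf.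
  by move=> j j' /c_inj [].
have fin : finite_set (fst @` [set p | c p = y] `|` [set i | x i = y]).
  by rewrite finite_setU; split; [apply/finite_image/finite_injective_fiber|
    exact: finite_injective_fiber].
apply: sub_finite_set fin => i /section_inf[[j cy]|]; by [left; exists (i, j)|right].
Qed.

End CvgAlongBI.

Lemma FinBW_below (X Y : Type) (I : set (set X)) (J : set (set Y))
    (T : topologicalType) :
  ideal_below I J -> FinBW J T -> FinBW I T.
Proof.
move=> [f [fbij fI]] [hT JBW]; split=> // u.
have [A [nJA [x ux]]] := JBW (u \o f).
exists (f @` A); split; last by exists x; exact: cvg_along_image.
move=> /fI; apply: contra_not nJA; congr J; apply/seteqP; split=> [a [b Ab]|a Aa].
  by move=> /(bij_inj fbij) <-.
by exists a.
Qed.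

Lemma seq_compact_FinBW_BI (T : topologicalType) : FinBW BI T -> seq_compact T.
Proof.
move=> [_ BW] u.
have [B [nB [x ux]]] := BW (fun m => u (pickle m.2)).
have [i Binf] := notBI_infinite_section nB.
have pickle_inj : injective (@pickle (nat * nat)%type) := pcan_inj pickleK.
have section_cvg : cvg_along [set p | B (i, p)] (u \o pickle) x.
  by apply: (cvg_along_preimage (f := pair i)) ux => p q [].
have [phi [phi_incr uphi]] := cvg_along_subseq
  (fun fin => Binf (finite_image_injective pickle_inj fin)) (cvg_along_image section_cvg).
by exists phi; split=> //; exists x.
Qed.

Definition infinite_range_limits (T : topologicalType) : set T :=
  [set x | exists u : nat -> T, u @ \oo --> x /\ infinite_set (range u)].
Arguments infinite_range_limits : clear implicits.

Lemma finite_infinite_range_limits (T : topologicalType) :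
  FinBW BI T -> finite_set (infinite_range_limits T).
Proof.
move=> [hT BW]; apply: contrapT => Linf.
have [x x_inj xL] := injective_selection (fun _ : nat => Linf).
have [u ux] := choice xL.
have [c c_inj c_tail] := injective_tail_selection (fun i => (ux i).2).
have c_cvg i : (fun j => c (i, j)) @ \oo --> x i.
  move=> U /(ux i).1[N _ uU]; exists N => // j /= Nj.
  by have [k jk ->] := c_tail i j; apply: uU; exact: leq_trans jk.
have [B [nB [y By]]] := BW (fun m => c (m.1, m.2.1)).
exact: nB (cvg_along_BI hT c_inj x_inj c_cvg By).
Qed.

Theorem proposition6p3 (X : Type) (I : set (set X)) :
  is_ideal I -> boring_ideal I ->
  forall T : topologicalType, hausdorff_space T -> FinBW I T -> boring_space T.
Proof.
move=> _ Iboring T _ /(FinBW_below Iboring) BW.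
split; first exact: seq_compact_FinBW_BI.
exists (infinite_range_limits T); split; first exact: finite_infinite_range_limits.
by move=> u [x ux] uinf; exists x => //; exists u.
Qed.
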